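(* Let $G$ be a group of order $n$ with identity $e$ and let $S\subseteq G\setminus\{e\}$ with $|S|=n-2$. If $G$ has a rotational sequencing, then $G$ has an $S$-sequencing.
   Context: For $S\subseteq G\setminus\{e\}$ with $|S|=k$, an $S$-sequencing of $G$ is an ordering $(g_1,\dots,g_k)$ of the elements of $S$ such that the partial products $h_0=e$, $h_i=g_1\cdots g_i$ ($1\le i\le k$) are pairwise distinct. Let $(a_1,\dots,a_{n-1})$ be a cyclic arrangement of the non-identity elements of $G$ and set $b_i=a_i^{-1}a_{i+1}$ for $1\le i\le n-1$, indices taken modulo $n-1$ (so $b_{n-1}=a_{n-1}^{-1}a_1$). If $b_1,\dots,b_{n-1}$ are pairwise distinct, then $(b_1,\dots,b_{n-1})$ is called a rotational sequencing of $G$. *)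

From mathcomp Require Import all_boot all_fingroup.
Set Implicit Arguments. Unset Strict Implicit. Unset Printing Implicit Defensive.
Local Open Scope group_scope.

(* The group G is the whole finite group type gT; its identity is 1. *)

Definition partial_prods (gT : finGroupType) (s : seq gT) : seq gT :=
  1 :: scanl (fun h g => h * g) 1 s.

Definition is_S_sequencing (gT : finGroupType) (S : {set gT}) (s : seq gT) :=
  perm_eq s (enum S) && uniq (partial_prods s).

Definition has_S_sequencing (gT : finGroupType) (S : {set gT}) : Prop :=
  exists s : seq gT, is_S_sequencing S s.

(* For a cyclic arrangement a = (a_1,...,a_m), the sequence
   b_i = a_i^{-1} a_{i+1}, indices mod m (b_m = a_m^{-1} a_1). *)
Definition rot_quotients (gT : finGroupType) (a : seq gT) : seq gT :=
  [seq p.1^-1 * p.2 | p <- zip a (rot 1 a)].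

(* a is a cyclic arrangement of the non-identity elements of G whose
   quotient sequence b is pairwise distinct, i.e. b is a rotational sequencing. *)
Definition rotational_arrangement (gT : finGroupType) (a : seq gT) :=
  perm_eq a (enum [set: gT]^#) && uniq (rot_quotients a).

Definition has_rotational_sequencing (gT : finGroupType) : Prop :=
  exists a : seq gT, rotational_arrangement a.

(* Let b_i = a_i^-1 a_(i+1) be a rotational sequencing.  Since the a_i are
   distinct, no b_i is the identity, so the n - 1 distinct b_i are exactly the
   non-identity elements, and S misses exactly one of them, say x = b_k.
   Starting the cycle just after a_k, the remaining quotients
   b_(k+1), ..., b_(k-1) have partial products a_(k+1)^-1 a_j for
   j = k+1, ..., k (cyclically), which are distinct because the a_j are. *)

From mathcomp Require Import all_boot all_fingroup.
Local Open Scope group_scope.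

Lemma rot_zip (S T : Type) k (s : seq S) (t : seq T) :
  size s = size t -> rot k (zip s t) = zip (rot k s) (rot k t).
Proof.
move=> eq_st; have [lt_sk | le_ks] := ltnP (size s) k.
  by rewrite !rot_oversize ?size_zip -?eq_st ?minnn // ltnW.
have le_kt : k <= size t by rewrite -eq_st.
have size_take_zip : size (zip (take k s) (take k t)) = k.
  by rewrite size_zip !size_takel ?minnn.
rewrite -{1}(cat_take_drop k s) -{1}(cat_take_drop k t) zip_cat; last first.
  by rewrite !size_takel.
by rewrite -{1}size_take_zip rot_size_cat -zip_cat // !size_drop eq_st.
Qed.

Lemma setU1_of_card_succ (T : finType) (A B : {set T}) :
  A \subset B -> #|B| = #|A|.+1 -> exists2 x, x \notin A & B = x |: A.
Proof.
move=> sAB cardB; have /cards1P[x defx] : #|B :\: A| == 1%N.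
  by rewrite cardsD (setIidPr sAB) cardB subSnn.
have : x \in B :\: A by rewrite defx set11.
rewrite inE => /andP[Ax _]; exists x => //.
by rewrite -(setID B A) (setIidPr sAB) defx setUC.
Qed.

Lemma perm_enum_setU1 (T : finType) (x : T) (A : {set T}) :
  x \notin A -> perm_eq (enum (x |: A)) (x :: enum A).
Proof.
move=> Ax; apply: uniq_perm; rewrite ?enum_uniq //= ?mem_enum ?Ax ?enum_uniq //.
by move=> y; rewrite mem_enum in_setU1 in_cons mem_enum.
Qed.

Section RotationalQuotients.

Context {gT : finGroupType}.
Implicit Types (a s : seq gT) (x : gT).

Definition ldivg (u v : gT) := u^-1 * v.

Lemma rot_quotients_cons (c0 : gT) (c : seq gT) :
  rot_quotients (c0 :: c) = pairmap ldivg c0 (rcons c c0).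
Proof.
rewrite /rot_quotients rot1_cons.
by elim: c c0 {2 4}c0 => [|y c IHc] u v //=; rewrite IHc.
Qed.

Lemma size_rot_quotients a : size (rot_quotients a) = size a.
Proof. by rewrite size_map size_zip size_rot minnn. Qed.

Lemma rot_quotients_rot k a : rot_quotients (rot k a) = rot k (rot_quotients a).
Proof. by rewrite /rot_quotients rot_rot -rot_zip ?size_rot // map_rot. Qed.

Lemma partial_prods_ldivg (c0 : gT) (c : seq gT) :
  partial_prods (pairmap ldivg c0 c) = [seq c0^-1 * y | y <- c0 :: c].
Proof.
rewrite /partial_prods /= mulVg; congr (_ :: _).
suff -> h : scanl (fun h g => h * g) h (pairmap ldivg c0 c)
              = [seq h * (c0^-1 * y) | y <- c].
  by apply: eq_map => y; rewrite mul1g.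
elim: c h c0 => [|y c IHc] h c0 //=; rewrite IHc; congr (_ :: _).
by apply: eq_map => z; rewrite /ldivg -!mulgA mulVKg.
Qed.

Lemma rot_to_quotient {a x} : 1 < size a -> x \in rot_quotients a ->
  exists i c0 c1 c, [/\ rot i a = [:: c0, c1 & c], x = c0^-1 * c1
                      & rot i (rot_quotients a) = x :: pairmap ldivg c1 (rcons c c0)].
Proof.
move=> a2 /rot_to[i s rot_b]; rewrite -(size_rot i) in a2.
case def_a: (rot i a) a2 => [|c0 [|c1 c]] // _.
have := rot_b; rewrite -rot_quotients_rot def_a rot_quotients_cons /=.
by case=> def_x def_s; exists i, c0, c1, c; rewrite rot_b -def_x -def_s; split.
Qed.

Lemma one_notin_rot_quotients a : uniq a -> 1 < size a -> 1 \notin rot_quotients a.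
Proof.
move=> ua a2; apply/negP=> /(rot_to_quotient a2)[i [c0 [c1 [c [def_a c01 _]]]]].
move/eqP: c01; rewrite eq_sym -eq_mulVg1 => /eqP eq_c.
by move: ua; rewrite -(rot_uniq i) def_a eq_c /= mem_head.
Qed.

Lemma perm_rot_quotients {a} : rotational_arrangement a -> 1 < size a ->
  perm_eq (rot_quotients a) (enum [set: gT]^#).
Proof.
case/andP=> perm_a uniq_b a2.
have ua : uniq a by rewrite (perm_uniq perm_a) enum_uniq.
have sub_b : {subset rot_quotients a <= enum [set: gT]^#}.
  move=> y b_y; rewrite mem_enum !inE andbT.
  by apply: contraTneq b_y => ->; apply: one_notin_rot_quotients.
apply: uniq_perm uniq_b (enum_uniq _) (uniq_min_size uniq_b sub_b _).2.
by rewrite size_rot_quotients (perm_size perm_a).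
Qed.

Lemma rot_quotients_sequencing {a x} :
  uniq a -> 1 < size a -> x \in rot_quotients a ->
  exists2 s, perm_eq (x :: s) (rot_quotients a) & uniq (partial_prods s).
Proof.
move=> ua a2 /(rot_to_quotient a2)[i [c0 [c1 [c [def_a _ rot_b]]]]].
exists (pairmap ldivg c1 (rcons c c0)); first by rewrite -rot_b perm_rot.
rewrite partial_prods_ldivg map_inj_uniq; last exact: mulgI.
have : uniq (rot 1 (rot i a)) by rewrite !rot_uniq.
by rewrite def_a rot1_cons.
Qed.

End RotationalQuotients.

Theorem lemma4p2 (gT : finGroupType) (S : {set gT}) :
  1 \notin S -> #|S|.+2 = #|[set: gT]| ->
  has_rotational_sequencing gT -> has_S_sequencing S.
Proof.
move=> S1 cardS [a rot_a].
have [-> | S_ne0] := eqVneq S set0.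
  by exists [::]; rewrite /is_S_sequencing enum_set0.
have card_G1 : #|[set: gT]^#| = #|S|.+1.
  by move: cardS; rewrite (cardsD1 1 [set: gT]) in_setT => -[].
have [x Sx def_G1] : exists2 x, x \notin S & [set: gT]^# = x |: S.
  apply: setU1_of_card_succ card_G1; apply/subsetP=> y Sy.
  by rewrite !inE andbT; apply: contraNneq S1 => <-.
have [perm_a _] := andP rot_a.
have ua : uniq a by rewrite (perm_uniq perm_a) enum_uniq.
have a2 : 1 < size a by rewrite (perm_size perm_a) -cardE card_G1 ltnS card_gt0.
have perm_b := perm_rot_quotients rot_a a2.
have b_x : x \in rot_quotients a by rewrite (perm_mem perm_b) mem_enum def_G1 setU11.
have [s perm_xs uniq_s] := rot_quotients_sequencing ua a2 b_x.
exists s; rewrite /is_S_sequencing uniq_s andbT -(perm_cons x).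
by rewrite (perm_trans perm_xs) // (perm_trans perm_b) // def_G1 perm_enum_setU1.
Qed.
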